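(* If $R=X^\dagger X$ with $X=\bigoplus_k(I_{\mathcal H_k}\otimes X_k)\in\mathcal A'_G$ is extremal in $\mathcal C_{K_0}$ and $S=\{k:X_k\ne0\}$, then $\sum_{k\in S}\operatorname{rank}(X_k)^2\le\dim(\mathcal H)^2$.
   Context: Let $\mathcal H,\mathcal K$ be finite-dimensional Hilbert spaces and $g\mapsto U_g$, $g\mapsto V_g$ unitary representations of a group $G$ on $\mathcal H$ and $\mathcal K$; $U_g^*$ is the complex conjugate in a fixed basis. Decompose $\mathcal K\otimes\mathcal H=\bigoplus_k(\mathcal H_k\otimes\mathbb C^{m_k})$ according to the equivalence classes $k$ of irreducible components of $V_g\otimes U_g^*$ (irreducible space $\mathcal H_k$, multiplicity $m_k$). The commutant $\mathcal A'_G$ consists of operators $\bigoplus_k(I_{\mathcal H_k}\otimes M_k)$. Fix $0\le K_0\le I_{\mathcal H}$ and let $\mathcal C_{K_0}=\{R\in\mathcal A'_G: R\ge0,\ \operatorname{Tr}_{\mathcal K}[R]=K_0\}$. *)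

(* Scalars: an arbitrary numClosedFieldType C (e.g. the complex
   numbers, 'complex R' for R a real closed field); operators on C^n are
   square matrices acting on column vectors. *)
From HB Require Import structures.
From mathcomp Require Import all_boot all_order all_algebra.
From mathcomp Require Import mxtens.
Set Implicit Arguments.
Unset Strict Implicit.
Unset Printing Implicit Defensive.
Import Order.TTheory GRing.Theory Num.Theory.
Local Open Scope ring_scope.

Section Defs.
Variable C : numClosedFieldType.

Definition adjmx m n (A : 'M[C]_(m, n)) : 'M[C]_(n, m) := (map_mx Num.conj A)^T.

Definition conjmx m n (A : 'M[C]_(m, n)) : 'M[C]_(m, n) := map_mx Num.conj A.

Definition psdmx n (A : 'M[C]_n) : Prop :=
  forall v : 'cV[C]_n, 0 <= (adjmx v *m A *m v) 0 0.

Definition unitarymx n (U : 'M[C]_n) : Prop := adjmx U *m U = 1%:M.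

(* Partial trace over the first tensor factor K (dimension e) of K (x) H. *)
Definition ptraceK e d (R : 'M[C]_(e * d)) : 'M[C]_d :=
  \matrix_(a, b) \sum_(i < e) R (mxtens_index (i, a)) (mxtens_index (i, b)).

Record is_group (G : Type) (mul : G -> G -> G) (one : G) (inv : G -> G) : Prop := {
  grp_assoc : forall x y z, mul x (mul y z) = mul (mul x y) z;
  grp_mul1 : forall x, mul one x = x;
  grp_mulV : forall x, mul (inv x) x = one }.

Definition unitary_rep (G : Type) (mul : G -> G -> G) n (rho : G -> 'M[C]_n) : Prop :=
  (forall g, unitarymx (rho g)) /\ (forall g h, rho (mul g h) = rho g *m rho h).

(* Irreducible: nonzero space with no invariant subspace other than 0 and the
   whole space (subspaces = row spaces of matrices, vectors written as rows,
   so v |-> rho g v reads v^T |-> v^T (rho g)^T). *)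
Definition irreducible_rep (G : Type) n (rho : G -> 'M[C]_n) : Prop :=
  (0 < n)%N /\
  forall A : 'M[C]_n, (forall g, (A *m (rho g)^T <= A)%MS) ->
     A = 0 \/ row_full A.

Definition equiv_rep (G : Type) n1 n2 (rho1 : G -> 'M[C]_n1) (rho2 : G -> 'M[C]_n2)
  : Prop :=
  exists (T : 'M[C]_(n1, n2)) (T' : 'M[C]_(n2, n1)),
    T *m T' = 1%:M /\ T' *m T = 1%:M /\ forall g, rho1 g *m T = T *m rho2 g.

(* Decomposition  K (x) H = (+)_k (H_k (x) C^{m_k})  of the representation
   g |-> V_g (x) U_g^*  into isotypic components: W k is an isometry from
   H_k (x) C^{m_k} (H_k = C^{dk k}) into K (x) H, the ranges are mutually
   orthogonal and span K (x) H, W k intertwines pi k (x) I with V (x) U^*,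
   each pi k is an irreducible unitary representation, distinct k give
   inequivalent representations, and every multiplicity is positive. *)
Definition isotypic_decomposition (G : Type) (mul : G -> G -> G) d e
  (U : G -> 'M[C]_d) (V : G -> 'M[C]_e) (n : nat) (dk mk : 'I_n -> nat)
  (pi : forall k, G -> 'M[C]_(dk k)) (W : forall k, 'M[C]_(e * d, dk k * mk k))
  : Prop :=
  [/\ forall k, unitary_rep mul (pi k) /\ irreducible_rep (pi k),
      forall k l, k != l -> ~ equiv_rep (pi k) (pi l)
    & forall k, (0 < mk k)%N] /\
  [/\ forall k, adjmx (W k) *m W k = 1%:M,
      forall k l, k != l -> adjmx (W k) *m W l = 0,
      \sum_(k < n) W k *m adjmx (W k) = 1%:M
    & forall k g, (V g *t conjmx (U g)) *m W k = W k *m (pi k g *t 1%:M)].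

(* The operator  (+)_k (I_{H_k} (x) M_k)  on K (x) H. *)
Definition commutant_elt e d n (dk mk : 'I_n -> nat)
  (W : forall k, 'M[C]_(e * d, dk k * mk k)) (M : forall k, 'M[C]_(mk k))
  : 'M[C]_(e * d) :=
  \sum_(k < n) W k *m ((1%:M : 'M[C]_(dk k)) *t M k) *m adjmx (W k).

Definition in_commutant e d n (dk mk : 'I_n -> nat)
  (W : forall k, 'M[C]_(e * d, dk k * mk k)) (R : 'M[C]_(e * d)) : Prop :=
  exists M : forall k, 'M[C]_(mk k), R = commutant_elt W M.

Definition CK0 e d n (dk mk : 'I_n -> nat)
  (W : forall k, 'M[C]_(e * d, dk k * mk k)) (K0 : 'M[C]_d) (R : 'M[C]_(e * d))
  : Prop :=
  [/\ in_commutant W R, psdmx R & ptraceK R = K0].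

Definition extremal m (S : 'M[C]_m -> Prop) (R : 'M[C]_m) : Prop :=
  S R /\ forall (R1 R2 : 'M[C]_m) (t : C), S R1 -> S R2 -> 0 < t < 1 ->
    R = t *: R1 + (1 - t) *: R2 -> R1 = R.

End Defs.

From HB Require Import structures.
From mathcomp Require Import all_boot all_order all_algebra.
From mathcomp Require Import mxtens.
Import Order.TTheory GRing.Theory Num.Theory.
Local Open Scope ring_scope.
Set Implicit Arguments.
Unset Strict Implicit.
Unset Printing Implicit Defensive.

(* Write R = X^* X = (+)_k (I (x) X_k^* X_k).  If a Hermitian family (D_k) has
   Tr_K (+)_k (I (x) X_k^* D_k X_k) = 0, then R +- eps (+)_k (I (x) X_k^* D_k X_k)
   stay positive for small eps and keep the partial trace K0, so extremality
   forces X_k^* D_k X_k = 0; splitting into Hermitian and anti-Hermitian parts,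
   this holds for every family (D_k).  Compressing each X_k to its rank r_k, the
   linear map (Z_k)_k |-> Tr_K (+)_k (I (x) X_k^* Z_k X_k) from (+)_k M_{r_k}
   into M_d is therefore injective, whence sum_k r_k^2 <= d^2. *)

Section Adjoint.
Variable C : numClosedFieldType.

Lemma adjmxK m n (A : 'M[C]_(m, n)) : adjmx (adjmx A) = A.
Proof. by apply/matrixP=> i j; rewrite !mxE conjCK. Qed.

Lemma adjmxM m n p (A : 'M[C]_(m, n)) (B : 'M[C]_(n, p)) :
  adjmx (A *m B) = adjmx B *m adjmx A.
Proof. by rewrite /adjmx map_mxM trmx_mul. Qed.

Lemma adjmxD m n (A B : 'M[C]_(m, n)) : adjmx (A + B) = adjmx A + adjmx B.
Proof. by apply/matrixP=> i j; rewrite !mxE rmorphD. Qed.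

Lemma adjmxN m n (A : 'M[C]_(m, n)) : adjmx (- A) = - adjmx A.
Proof. by apply/matrixP=> i j; rewrite !mxE rmorphN. Qed.

Lemma adjmxZ m n (a : C) (A : 'M[C]_(m, n)) : adjmx (a *: A) = a^* *: adjmx A.
Proof. by apply/matrixP=> i j; rewrite !mxE rmorphM. Qed.

Lemma adjmx1 m : adjmx (1%:M : 'M[C]_m) = 1%:M.
Proof. by apply/matrixP=> i j; rewrite !mxE eq_sym rmorph_nat. Qed.

Lemma adjmx_sum m n (I : finType) (F : I -> 'M[C]_(m, n)) :
  adjmx (\sum_i F i) = \sum_i adjmx (F i).
Proof.
apply/matrixP=> i j; rewrite !mxE !summxE rmorph_sum.
by apply: eq_bigr=> k _; rewrite !mxE.
Qed.

Lemma adjmx_tens m n p q (A : 'M[C]_(m, n)) (B : 'M[C]_(p, q)) :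
  adjmx (A *t B) = adjmx A *t adjmx B.
Proof. by rewrite /adjmx (map_mxT Num.conj) trmx_tens. Qed.

End Adjoint.

Section Tensor.
Variable R : comPzRingType.

Lemma tensmxDr m n p q (A : 'M[R]_(m, n)) (B B' : 'M[R]_(p, q)) :
  A *t (B + B') = A *t B + A *t B'.
Proof. by apply/matrixP=> i j; rewrite !mxE mulrDr. Qed.

Lemma tensmxZr m n p q (A : 'M[R]_(m, n)) (a : R) (B : 'M[R]_(p, q)) :
  A *t (a *: B) = a *: (A *t B).
Proof. by apply/matrixP=> i j; rewrite !mxE mulrCA. Qed.

Lemma tensmx11 m p : (1%:M : 'M[R]_m) *t (1%:M : 'M[R]_p) = 1%:M.
Proof.
apply/matrixP=> i j.
case: (mxtens_indexP i)=> a b; case: (mxtens_indexP j)=> c d.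
rewrite tensmxE !mxE (can_eq (@mxtens_indexK _ _)) xpair_eqE.
by case: (a == c); case: (b == d); rewrite ?mulr1 ?mulr0.
Qed.

Lemma tens1mx_eq0 m p (B : 'M[R]_p) :
  (0 < m)%N -> (1%:M : 'M[R]_m) *t B = 0 -> B = 0.
Proof.
move=> m_gt0 /matrixP B0; apply/matrixP=> i j.
have := B0 (mxtens_index (Ordinal m_gt0, i)) (mxtens_index (Ordinal m_gt0, j)).
by rewrite tensmxE !mxE eqxx mul1r.
Qed.

End Tensor.

Section PartialTrace.
Variables (C : numClosedFieldType) (e d : nat).

Lemma ptraceKD (A B : 'M[C]_(e * d)) : ptraceK (A + B) = ptraceK A + ptraceK B.
Proof.
by apply/matrixP=> i j; rewrite !mxE -big_split; apply: eq_bigr=> k _; rewrite mxE.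
Qed.

Lemma ptraceKZ (a : C) (A : 'M[C]_(e * d)) : ptraceK (a *: A) = a *: ptraceK A.
Proof.
by apply/matrixP=> i j; rewrite !mxE mulr_sumr; apply: eq_bigr=> k _; rewrite mxE.
Qed.

Lemma ptraceK_sum (I : finType) (F : I -> 'M[C]_(e * d)) :
  ptraceK (\sum_i F i) = \sum_i ptraceK (F i).
Proof.
apply/matrixP=> i j; rewrite summxE mxE.
under eq_bigr do rewrite summxE.
by rewrite exchange_big; apply: eq_bigr=> k _; rewrite mxE.
Qed.

Lemma ptraceK_adj (A : 'M[C]_(e * d)) : ptraceK (adjmx A) = adjmx (ptraceK A).
Proof.
by apply/matrixP=> i j; rewrite !mxE rmorph_sum; apply: eq_bigr=> k _; rewrite !mxE.
Qed.

End PartialTrace.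

Section Positivity.
Variable C : numClosedFieldType.

Lemma psdmx_sum m (I : finType) (F : I -> 'M[C]_m) :
  (forall i, psdmx (F i)) -> psdmx (\sum_i F i).
Proof.
move=> F_psd v; rewrite mulmx_sumr mulmx_suml summxE.
by apply: sumr_ge0=> i _; apply: F_psd.
Qed.

Lemma psdmx_congr p q (A : 'M[C]_q) (B : 'M[C]_(p, q)) :
  psdmx A -> psdmx (B *m A *m adjmx B).
Proof. by move=> A_psd v; have := A_psd (adjmx B *m v); rewrite adjmxM adjmxK !mulmxA. Qed.

Definition mxnorm1 m (A : 'M[C]_m) := \sum_i \sum_j `|A i j|.

Lemma mxnorm1_ge0 m (A : 'M[C]_m) : 0 <= mxnorm1 A.
Proof. by apply: sumr_ge0=> i _; apply: sumr_ge0=> j _; apply: normr_ge0. Qed.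

Lemma mxnorm1Z m (a : C) (A : 'M[C]_m) : mxnorm1 (a *: A) = `|a| * mxnorm1 A.
Proof.
rewrite /mxnorm1 mulr_sumr; apply: eq_bigr=> i _.
by rewrite mulr_sumr; apply: eq_bigr=> j _; rewrite mxE normrM.
Qed.

Lemma cnorm2E m (v : 'cV[C]_m) : (adjmx v *m v) 0 0 = \sum_i `|v i 0| ^+ 2.
Proof. by rewrite mxE; apply: eq_bigr=> i _; rewrite !mxE normCK mulrC. Qed.

Lemma normr_quadform_le m (A : 'M[C]_m) (v : 'cV[C]_m) :
  `|(adjmx v *m A *m v) 0 0| <= mxnorm1 A * (adjmx v *m v) 0 0.
Proof.
set S := (adjmx v *m v) 0 0.
have le_sqr_S i : `|v i 0| ^+ 2 <= S.
  by rewrite /S cnorm2E (bigD1 i) //= lerDl sumr_ge0 // => j _; apply: exprn_ge0.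
have le_prod_S i j : `|v i 0| * `|v j 0| <= S.
  have [le_ij|le_ji] := real_leP (normr_real (v i 0)) (normr_real (v j 0)).
    by apply: le_trans (le_sqr_S j); rewrite expr2 ler_wpM2r.
  by apply: le_trans (le_sqr_S i); rewrite expr2 ler_wpM2l // ltW.
rewrite mxE; apply: le_trans (ler_norm_sum _ _ _) _.
rewrite /mxnorm1 mulr_suml; under [X in _ <= X]eq_bigr do rewrite mulr_suml.
rewrite [X in _ <= X]exchange_big /=; apply: ler_sum=> j _.
rewrite mxE normrM; apply: le_trans (ler_wpM2r (normr_ge0 _) (ler_norm_sum _ _ _)) _.
rewrite mulr_suml; apply: ler_sum=> i _.
rewrite !mxE normrM norm_conjC mulrAC mulrC.
by apply: ler_wpM2l => //; apply: le_prod_S.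
Qed.

Lemma hermitian_quadform_real m (A : 'M[C]_m) (v : 'cV[C]_m) :
  adjmx A = A -> (adjmx v *m A *m v) 0 0 \is Num.real.
Proof.
move=> A_herm; rewrite CrealE; apply/eqP.
have -> : ((adjmx v *m A *m v) 0 0)^* = adjmx (adjmx v *m A *m v) 0 0 by rewrite !mxE.
by rewrite !adjmxM adjmxK A_herm mulmxA.
Qed.

Lemma psdmx_1D m (A : 'M[C]_m) : adjmx A = A -> mxnorm1 A <= 1 -> psdmx (1%:M + A).
Proof.
move=> A_herm A_small v.
rewrite mulmxDr mulmx1 mulmxDl mxE addrC -[X in _ + X]opprK subr_ge0.
apply: real_lerNnormlW; first exact: hermitian_quadform_real.
apply: le_trans (normr_quadform_le A v) _.
by apply: ler_piMl => //; rewrite cnorm2E sumr_ge0 // => i _; apply: exprn_ge0.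
Qed.

End Positivity.

Section Commutant.
Variables (C : numClosedFieldType) (e d n : nat) (dk mk : 'I_n -> nat).
Variable W : forall k, 'M[C]_(e * d, dk k * mk k).
Local Notation Wc := (commutant_elt W).
Local Notation I_ k := (1%:M : 'M[C]_(dk k)).

Lemma eq_commutant_elt (A B : forall k, 'M[C]_(mk k)) :
  (forall k, A k = B k) -> Wc A = Wc B.
Proof. by move=> eqAB; apply: eq_bigr=> k _; rewrite eqAB. Qed.

Lemma commutant_eltD (A B : forall k, 'M[C]_(mk k)) :
  Wc (fun k => A k + B k) = Wc A + Wc B.
Proof.
rewrite /commutant_elt -big_split; apply: eq_bigr=> k _.
by rewrite tensmxDr mulmxDr mulmxDl.
Qed.

Lemma commutant_eltZ (a : C) (A : forall k, 'M[C]_(mk k)) :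
  Wc (fun k => a *: A k) = a *: Wc A.
Proof.
rewrite /commutant_elt scaler_sumr; apply: eq_bigr=> k _.
by rewrite tensmxZr -scalemxAr -scalemxAl.
Qed.

Lemma commutant_eltN (A : forall k, 'M[C]_(mk k)) : Wc (fun k => - A k) = - Wc A.
Proof.
by rewrite -scaleN1r -commutant_eltZ; apply: eq_commutant_elt=> k; rewrite scaleN1r.
Qed.

Lemma adjmx_commutant_elt (A : forall k, 'M[C]_(mk k)) :
  adjmx (Wc A) = Wc (fun k => adjmx (A k)).
Proof.
rewrite /commutant_elt adjmx_sum; apply: eq_bigr=> k _.
by rewrite !adjmxM adjmxK adjmx_tens adjmx1 mulmxA.
Qed.

Lemma psdmx_commutant_elt (A : forall k, 'M[C]_(mk k)) :
  (forall k, psdmx (I_ k *t A k)) -> psdmx (Wc A).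
Proof. by move=> A_psd; apply: psdmx_sum=> k; apply: psdmx_congr. Qed.

Lemma psdmx_commutant_perturb (X D : forall k, 'M[C]_(mk k)) (a : C) :
  (forall k, adjmx (D k) = D k) -> a \is Num.real ->
  (forall k, `|a| * mxnorm1 (I_ k *t D k) <= 1) ->
  psdmx (Wc (fun k => adjmx (X k) *m (1%:M + a *: D k) *m X k)).
Proof.
move=> D_herm a_real a_small; apply: psdmx_commutant_elt=> k.
have -> : I_ k *t (adjmx (X k) *m (1%:M + a *: D k) *m X k) =
    adjmx (I_ k *t X k) *m (1%:M + a *: (I_ k *t D k)) *m adjmx (adjmx (I_ k *t X k)).
  by rewrite adjmxK adjmx_tens adjmx1 -tensmx11 -tensmxZr -tensmxDr !tensmx_mul !mul1mx.
apply/psdmx_congr/psdmx_1D; last by rewrite mxnorm1Z.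
by rewrite adjmxZ adjmx_tens adjmx1 D_herm conj_Creal.
Qed.

Hypothesis W_isometry : forall k, adjmx (W k) *m W k = 1%:M.
Hypothesis W_orthogonal : forall k l, k != l -> adjmx (W k) *m W l = 0.

Lemma adjmx_mul_commutant_elt (A : forall k, 'M[C]_(mk k)) k :
  adjmx (W k) *m Wc A = (I_ k *t A k) *m adjmx (W k).
Proof.
rewrite /commutant_elt mulmx_sumr (bigD1 k) //= big1 => [|l neq_lk].
  by rewrite addr0 !mulmxA W_isometry mul1mx.
by rewrite !mulmxA W_orthogonal 1?eq_sym // !mul0mx.
Qed.

Lemma commutant_elt_component (A : forall k, 'M[C]_(mk k)) k :
  adjmx (W k) *m Wc A *m W k = I_ k *t A k.
Proof. by rewrite adjmx_mul_commutant_elt -mulmxA W_isometry mulmx1. Qed.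

Lemma commutant_eltM (A B : forall k, 'M[C]_(mk k)) :
  Wc A *m Wc B = Wc (fun k => A k *m B k).
Proof.
rewrite {1}/commutant_elt mulmx_suml; apply: eq_bigr=> k _.
by rewrite -mulmxA adjmx_mul_commutant_elt !mulmxA -(mulmxA (W k)) tensmx_mul mul1mx.
Qed.

End Commutant.

Lemma extremal_perturb_eq0 (C : numClosedFieldType) m (S : 'M[C]_m -> Prop)
    (R B : 'M[C]_m) :
  extremal S R -> S (R + B) -> S (R - B) -> B = 0.
Proof.
case=> _ R_ext SRB SRB'.
have half_gt0 : 0 < (2^-1 : C) < 1 by rewrite invr_gt0 ltr0n invf_lt1 ?ltr0n // ltr1n.
have half_half : 1 - 2^-1 = 2^-1 :> C.
  by apply: (@mulfI _ 2); rewrite ?pnatr_eq0 // mulrBr mulr1 divff ?pnatr_eq0 // addrK.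
have R_mid : R = 2^-1 *: (R + B) + (1 - 2^-1) *: (R - B).
  rewrite half_half -scalerDr addrACA subrr addr0 -mulr2n -scaler_nat scalerA.
  by rewrite mulVf ?pnatr_eq0 ?scale1r.
by apply: (addrI R); rewrite addr0 (R_ext _ _ _ SRB SRB' half_gt0 R_mid).
Qed.

Section Extremal.
Variables (C : numClosedFieldType) (e d n : nat) (dk mk : 'I_n -> nat).
Variable W : forall k, 'M[C]_(e * d, dk k * mk k).
Variables (X : forall k, 'M[C]_(mk k)) (K0 : 'M[C]_d).
Local Notation Wc := (commutant_elt W).
Local Notation I_ k := (1%:M : 'M[C]_(dk k)).
Local Notation sandwich Y := (fun k => adjmx (X k) *m Y k *m X k).
Hypothesis W_isometry : forall k, adjmx (W k) *m W k = 1%:M.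
Hypothesis W_orthogonal : forall k l, k != l -> adjmx (W k) *m W l = 0.
Hypothesis dk_gt0 : forall k, (0 < dk k)%N.
Hypothesis R_extremal : extremal (CK0 W K0) (adjmx (Wc X) *m Wc X).

Lemma commutant_sandwich_eq0 (Y : forall k, 'M[C]_(mk k)) :
  Wc (sandwich Y) = 0 -> forall k, adjmx (X k) *m Y k *m X k = 0.
Proof.
move=> Y0 k; apply: (tens1mx_eq0 (dk_gt0 k)).
by rewrite -(commutant_elt_component W_isometry W_orthogonal (sandwich Y)) Y0 mulmx0 mul0mx.
Qed.

Lemma extremal_hermitian_null (D : forall k, 'M[C]_(mk k)) :
  (forall k, adjmx (D k) = D k) -> ptraceK (Wc (sandwich D)) = 0 ->
  forall k, adjmx (X k) *m D k *m X k = 0.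
Proof.
move=> D_herm ptD0; apply: commutant_sandwich_eq0.
set R := adjmx (Wc X) *m Wc X; set B := Wc (sandwich D).
have RE : R = Wc (fun k => adjmx (X k) *m X k).
  by rewrite /R adjmx_commutant_elt (commutant_eltM W_isometry W_orthogonal).
have ptR : ptraceK R = K0 by case: R_extremal => -[].
pose c := \sum_k mxnorm1 (I_ k *t D k); pose eps := (1 + c)^-1.
have c_ge0 : 0 <= c by apply: sumr_ge0=> k _; apply: mxnorm1_ge0.
have c1_gt0 : 0 < 1 + c by apply: ltr_wpDr.
have eps_gt0 : 0 < eps by rewrite invr_gt0.
have CK0_perturb a : a \is Num.real -> `|a| <= eps -> CK0 W K0 (R + a *: B).
  move=> a_real a_small.
  have RaE : R + a *: B = Wc (fun k => adjmx (X k) *m (1%:M + a *: D k) *m X k).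
    rewrite RE /B -commutant_eltZ -commutant_eltD; apply: eq_commutant_elt=> k.
    by rewrite mulmxDr mulmx1 mulmxDl -scalemxAr -scalemxAl.
  split; [by rewrite RaE; eexists | rewrite RaE; apply: psdmx_commutant_perturb => // k |].
    have Dk_le_c : mxnorm1 (I_ k *t D k) <= c.
      by rewrite /c (bigD1 k) //= lerDl sumr_ge0 // => l _; apply: mxnorm1_ge0.
    apply: le_trans (ler_wpM2r (mxnorm1_ge0 _) a_small) _.
    rewrite ler_pdivrMl // mulr1; apply: le_trans Dk_le_c _.
    by rewrite lerDr ler01.
  by rewrite ptraceKD ptraceKZ ptD0 scaler0 addr0.
have epsB0 : eps *: B = 0.
  have eps_real : eps \is Num.real by apply: gtr0_real.
  have eps_norm : `|eps| <= eps by rewrite ger0_norm // ltW.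
  apply: (extremal_perturb_eq0 R_extremal); first exact: CK0_perturb.
  by rewrite -scaleNr; apply: CK0_perturb; rewrite ?rpredN ?normrN.
by move/eqP: epsB0; rewrite scaler_eq0 (negPf (lt0r_neq0 eps_gt0)) => /eqP.
Qed.

Lemma adjmx_commutant_sandwich (Y : forall k, 'M[C]_(mk k)) :
  adjmx (Wc (sandwich Y)) = Wc (sandwich (fun k => adjmx (Y k))).
Proof.
by rewrite adjmx_commutant_elt; apply: eq_commutant_elt=> k; rewrite !adjmxM adjmxK mulmxA.
Qed.

Lemma extremal_null (Y : forall k, 'M[C]_(mk k)) :
  ptraceK (Wc (sandwich Y)) = 0 -> forall k, adjmx (X k) *m Y k *m X k = 0.
Proof.
move=> ptY0 k; set Z := Wc (sandwich Y).
have ptZ'0 : ptraceK (adjmx Z) = 0.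
  by rewrite ptraceK_adj ptY0; apply/matrixP=> i j; rewrite !mxE conjC0.
have re0 : adjmx (X k) *m (Y k + adjmx (Y k)) *m X k = 0.
  apply: (extremal_hermitian_null (D := fun k => Y k + adjmx (Y k))) => [l|].
    by rewrite adjmxD adjmxK addrC.
  have -> : Wc (sandwich (fun k => Y k + adjmx (Y k))) = Z + adjmx Z.
    rewrite adjmx_commutant_sandwich -commutant_eltD.
    by apply: eq_commutant_elt=> l; rewrite mulmxDr mulmxDl.
  by rewrite ptraceKD ptY0 ptZ'0 addr0.
have im0 : adjmx (X k) *m ('i *: (Y k - adjmx (Y k))) *m X k = 0.
  apply: (extremal_hermitian_null (D := fun k => 'i *: (Y k - adjmx (Y k)))) => [l|].
    by rewrite adjmxZ conjCi adjmxD adjmxN adjmxK scaleNr -scalerN opprB addrC.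
  have -> : Wc (sandwich (fun k => 'i *: (Y k - adjmx (Y k)))) = 'i *: (Z - adjmx Z).
    rewrite adjmx_commutant_sandwich -commutant_eltN -commutant_eltD -commutant_eltZ.
    apply: eq_commutant_elt=> l.
    by rewrite -scalemxAr -scalemxAl mulmxDr mulmxDl mulmxN mulNmx.
  rewrite ptraceKZ -[_ - _]/(Z + - adjmx Z) ptraceKD -scaleN1r ptraceKZ.
  by rewrite ptY0 ptZ'0 !(scaler0, addr0).
have Y2 : (2%:R : C) *: Y k = (Y k + adjmx (Y k)) - 'i *: ('i *: (Y k - adjmx (Y k))).
  by rewrite scalerA -expr2 sqrCi scaleN1r opprK addrACA subrr addr0 scaler_nat mulr2n.
have : adjmx (X k) *m ((2%:R : C) *: Y k) *m X k = 0.
  by rewrite Y2 mulmxBr mulmxBl -scalemxAr -scalemxAl re0 im0 scaler0 subr0.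
by rewrite -scalemxAr -scalemxAl => /eqP; rewrite scaler_eq0 pnatr_eq0 => /eqP.
Qed.

End Extremal.

Lemma mul_rV_lin1_linear (F : fieldType) m n (f : 'rV[F]_m -> 'rV[F]_n) :
  linear f -> forall u, u *m lin1_mx f = f u.
Proof.
move=> f_lin; pose g : {linear _ -> _} := HB.pack f (GRing.isLinear.Build _ _ _ _ f f_lin).
exact: (mul_rV_lin1 g).
Qed.

Lemma rank_compression (F : fieldType) m n (A : 'M[F]_(m, n)) :
  exists P : 'M_(\rank A, m), exists Q : 'M_(n, \rank A), P *m A *m Q = 1%:M.
Proof.
have [P PA1] := row_fullP (col_base_full A); have [Q AQ1] := row_freeP (row_base_free A).
exists P, Q; rewrite -[P *m A](congr1 (mulmx P) (mulmx_base A)) mulmxA PA1 mul1mx.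
exact: AQ1.
Qed.

Section Count.
Variables (C : numClosedFieldType) (e d n : nat) (dk mk : 'I_n -> nat).
Variable W : forall k, 'M[C]_(e * d, dk k * mk k).
Variable X : forall k, 'M[C]_(mk k).
Local Notation Wc := (commutant_elt W).
Local Notation I_ k := (1%:M : 'M[C]_(dk k)).
Local Notation sandwich Y := (fun k => adjmx (X k) *m Y k *m X k).
Local Notation r k := (\rank (X k)).
Hypothesis ptraceK_sandwich_faithful : forall Y : forall k, 'M[C]_(mk k),
  ptraceK (Wc (sandwich Y)) = 0 -> forall k, adjmx (X k) *m Y k *m X k = 0.

Section Compression.
Local Unset Implicit Arguments.
Variables (P : forall k, 'M[C]_(r k, mk k)) (Q : forall k, 'M[C]_(mk k, r k)).
Hypothesis PXQ : forall k, P k *m X k *m Q k = 1%:M.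

Let lift k (Z : 'M[C]_(r k)) := adjmx (P k) *m Z *m P k.

Let ptrace_lift k (u : 'rV[C]_(r k * r k)) : 'rV[C]_(d * d) :=
  mxvec (ptraceK
    (W k *m (I_ k *t (adjmx (X k) *m lift k (vec_mx u) *m X k)) *m adjmx (W k))).

Lemma ptrace_lift_linear k : linear (ptrace_lift k).
Proof.
move=> a u v; rewrite /ptrace_lift /lift linearP /= !(mulmxDr, mulmxDl).
rewrite -!(scalemxAr, scalemxAl) tensmxDr tensmxZr !(mulmxDr, mulmxDl).
by rewrite -!(scalemxAr, scalemxAl) ptraceKD ptraceKZ linearP.
Qed.

Lemma sandwich_lift_inj k (Z : 'M[C]_(r k)) :
  adjmx (X k) *m lift k Z *m X k = 0 -> Z = 0.
Proof.
move=> XZX0.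
have : adjmx (P k *m X k *m Q k) *m Z *m (P k *m X k *m Q k) =
    adjmx (Q k) *m (adjmx (X k) *m lift k Z *m X k) *m Q k by rewrite !adjmxM /lift !mulmxA.
by rewrite XZX0 mulmx0 mul0mx PXQ adjmx1 mul1mx mulmx1.
Qed.

Let ptrace_mx := \mxcol_k lin1_mx (ptrace_lift k).

Lemma ptrace_mx_inj (u : 'rV[C]_(\sum_k r k * r k)) : u *m ptrace_mx = 0 -> u = 0.
Proof.
rewrite -(submxrowK u) mul_mxrow_mxcol => uM0.
have : ptraceK (Wc (sandwich (fun k => lift k (vec_mx (submxrow u k))))) = 0.
  apply/eqP; rewrite -mxvec_eq0 -uM0 ptraceK_sum raddf_sum; apply/eqP/eq_bigr=> k _.
  by rewrite mul_rV_lin1_linear //; apply: ptrace_lift_linear.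
move/ptraceK_sandwich_faithful=> XZX0.
rewrite -(mxrow0 (q_ := fun k => (r k * r k)%N)); apply: eq_mxrow=> k.
by rewrite -[submxrow u k]vec_mxK (sandwich_lift_inj _ _ (XZX0 k)) linear0.
Qed.

Lemma ptrace_mx_free : row_free ptrace_mx.
Proof.
rewrite -kermx_eq0 -submx0; apply/row_subP=> i.
by rewrite (ptrace_mx_inj _ (sub_kermxP (row_sub i _))) sub0mx.
Qed.

Lemma sum_rank_sq_le_compressed : (\sum_k r k ^ 2 <= d ^ 2)%N.
Proof.
rewrite -mulnn; under eq_bigr do rewrite -mulnn.
by have := rank_leq_col ptrace_mx; rewrite (eqP ptrace_mx_free).
Qed.

End Compression.

Lemma sum_rank_sq_le : (\sum_k r k ^ 2 <= d ^ 2)%N.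
Proof.
have /fin_all_exists[P /fin_all_exists[Q PXQ]] := fun k => rank_compression (X k).
exact: sum_rank_sq_le_compressed PXQ.
Qed.

End Count.

Theorem mainTheorem13 (C : numClosedFieldType)
  (G : Type) (mul : G -> G -> G) (one : G) (inv : G -> G)
  (d e : nat) (U : G -> 'M[C]_d) (V : G -> 'M[C]_e) (K0 : 'M[C]_d)
  (n : nat) (dk mk : 'I_n -> nat)
  (pi : forall k, G -> 'M[C]_(dk k))
  (W : forall k, 'M[C]_(e * d, dk k * mk k))
  (X : forall k, 'M[C]_(mk k)) :
  is_group mul one inv ->
  unitary_rep mul U -> unitary_rep mul V ->
  isotypic_decomposition mul U V pi W ->
  psdmx K0 -> psdmx (1%:M - K0) ->
  extremal (CK0 W K0)
    (adjmx (commutant_elt W X) *m commutant_elt W X) ->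
  (\sum_(k < n | (X k != 0)%R) (\rank (X k)) ^ 2 <= d ^ 2)%N.
Proof.
move=> _ _ _ [[pi_irr _ _] [W_isometry W_orthogonal _ _]] _ _ R_extremal.
have dk_gt0 k : (0 < dk k)%N by case: (pi_irr k) => _ [].
apply: leq_trans (sum_rank_sq_le (extremal_null W_isometry W_orthogonal dk_gt0 R_extremal)).
by rewrite big_mkcond /=; apply: leq_sum => k _; case: ifP.
Qed.
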